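(* Let $\gamma_1,\gamma_2>0$, let $M\ge1$ be an integer, and let $Z\sim\mathrm{Gamma}(M,1)$ and $Y\sim\mathrm{Gamma}(1,1)$ be independent. Let $X=\dfrac{\gamma_1 Z}{1+\gamma_2 Y}$. Then $$\mathbb{E}[\log_2(1+X)]=\log_2(e)\sum_{i=0}^{M-1}\sum_{l=0}^{i}\frac{\gamma_1^{\,l+1-i}}{\gamma_2\,(i-l)!}\,I_1\!\left(\frac{1}{\gamma_1},\frac{\gamma_1}{\gamma_2},i,l+1\right),$$ where $I_1(a,b,m,n)=\displaystyle\int_0^\infty\frac{x^m e^{-ax}}{(x+b)^n(x+1)}\,dx$.
   Context: $\mathrm{Gamma}(M,1)$ denotes the distribution of a sum of $M$ i.i.d. unit-mean exponential random variables (the paper writes $\chi^2_{2M}$). This quantity is denoted $R_I^{(2)}(\gamma_1,\gamma_2,M)$. *)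

From Stdlib Require Import Reals Lra Lia ZArith.
Open Scope R_scope.

Definition log2 (x : R) : R := ln x / ln 2.

Definition ImpInt (f : R -> R) (l : R) : Prop :=
  (forall b, 0 <= b -> exists pr : Riemann_integrable f 0 b, True) /\
  (forall eps, 0 < eps -> exists B, 0 <= B /\
     forall b (pr : Riemann_integrable f 0 b), B <= b ->
       Rabs (RiemannInt pr - l) < eps).

Definition gamma_pdf (M : nat) (z : R) : R :=
  z ^ (M - 1) * exp (- z) / INR (fact (M - 1)).

Definition exp_pdf (y : R) : R := exp (- y).

Definition I1_integrand (a b : R) (m n : nat) (x : R) : R :=
  x ^ m * exp (- (a * x)) / ((x + b) ^ n * (x + 1)).

From Coquelicot Require Import Coquelicot.
From Stdlib Require Import Reals Lra Lia ZArith Classical.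
Open Scope R_scope.

(* Write Z ~ Gamma(N+1,1) and c = g1 / (1 + g2 y).  Integrating [ln (1 + c z)] by parts
   against the density of Z and substituting [x = c z] turns the inner integral into
   [int_0^oo e^(-y) P(Z > x / c) / (1 + x) dx].  This kernel is dominated by a product of
   decaying exponentials in [x] and [y], so the order of integration can be swapped.
   Since [P(Z > w) = sum_(i <= N) e^(-w) w^i / i!], the integral in [y] is a finite
   combination of [int_0^oo e^(-lam y) (1 + g2 y)^i dy], which repeated integration by
   parts evaluates in closed form; regrouping in [x] yields the integrands of [I_1]. *)

(** * Improper integrals over [0, +oo) *)

Definition is_RInt_0_infty (f : R -> R) (l : R) : Prop :=
  (forall b, 0 <= b -> ex_RInt f 0 b) /\ is_lim (fun b => RInt f 0 b) p_infty l.

Definition RInt_0_infty (f : R -> R) : R := real (Lim (fun b => RInt f 0 b) p_infty).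

Lemma is_RInt_0_infty_unique f l : is_RInt_0_infty f l -> RInt_0_infty f = l.
Proof. intros [_ H]. unfold RInt_0_infty. now rewrite (is_lim_unique _ _ _ H). Qed.

Lemma is_RInt_0_infty_ImpInt f l : is_RInt_0_infty f l -> ImpInt f l.
Proof.
  intros [Hi Hl]. split.
  - intros b Hb. exists (ex_RInt_Reals_0 _ _ _ (Hi b Hb)). exact I.
  - intros eps He. apply is_lim_spec in Hl. destruct (Hl (mkposreal eps He)) as [B HB].
    exists (Rmax 0 (B + 1)). split; [apply Rmax_l|].
    intros b pr Hb. rewrite <- RInt_Reals. apply HB. pose proof (Rmax_r 0 (B + 1)). lra.
Qed.

Lemma is_RInt_0_infty_ext f g l :
  (forall x, 0 <= x -> f x = g x) -> is_RInt_0_infty f l -> is_RInt_0_infty g l.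
Proof.
  intros He [Hi Hl]. split.
  - intros b Hb. apply (ex_RInt_ext f); [|now apply Hi].
    intros x Hx. apply He. rewrite Rmin_left in Hx; lra.
  - apply (is_lim_ext_loc (fun b => RInt f 0 b)); [|exact Hl].
    exists 0. intros b Hb. apply RInt_ext. intros x Hx. apply He. rewrite Rmin_left in Hx; lra.
Qed.

Lemma is_RInt_0_infty_plus f g a b :
  is_RInt_0_infty f a -> is_RInt_0_infty g b -> is_RInt_0_infty (fun x => f x + g x) (a + b).
Proof.
  intros [Hfi Hfl] [Hgi Hgl]. split.
  - intros c Hc. now apply (ex_RInt_plus f g); auto.
  - apply (is_lim_ext_loc (fun c => RInt f 0 c + RInt g 0 c)); [|now apply is_lim_plus'].
    exists 0. intros c Hc. symmetry. apply (RInt_plus f g); [apply Hfi | apply Hgi]; lra.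
Qed.

Lemma is_RInt_0_infty_scal f a c :
  is_RInt_0_infty f a -> is_RInt_0_infty (fun x => c * f x) (c * a).
Proof.
  intros [Hfi Hfl]. split.
  - intros b Hb. now apply (ex_RInt_scal f), Hfi.
  - apply (is_lim_ext_loc (fun b => c * RInt f 0 b)); [|exact (is_lim_scal_l _ c _ a Hfl)].
    exists 0. intros b Hb. symmetry. apply (RInt_scal f), Hfi. lra.
Qed.

Lemma is_RInt_0_infty_sum (f : nat -> R -> R) (l : nat -> R) n :
  (forall i, (i <= n)%nat -> is_RInt_0_infty (f i) (l i)) ->
  is_RInt_0_infty (fun x => sum_f_R0 (fun i => f i x) n) (sum_f_R0 l n).
Proof.
  induction n as [|n IH]; intros H; simpl.
  - apply H; lia.
  - apply is_RInt_0_infty_plus; [apply IH; intros; apply H|apply H]; lia.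
Qed.

Lemma RInt_0_nondecreasing g a b :
  (forall x, 0 <= x -> 0 <= g x) -> (forall c, 0 <= c -> ex_RInt g 0 c) ->
  0 <= a <= b -> RInt g 0 a <= RInt g 0 b.
Proof.
  intros Hp Hi Hab.
  assert (Hab' : ex_RInt g a b) by (apply (ex_RInt_Chasles_2 g 0); [lra|apply Hi; lra]).
  rewrite <- (RInt_Chasles g 0 a b); [|apply Hi; lra|exact Hab'].
  assert (0 <= RInt g a b) by (apply RInt_ge_0; [lra|exact Hab'|intros; apply Hp; lra]).
  change (RInt g 0 a <= RInt g 0 a + RInt g a b). lra.
Qed.

Lemma RInt_0_sub g b c : ex_RInt g 0 c -> 0 <= b <= c -> RInt g b c = RInt g 0 c - RInt g 0 b.
Proof.
  intros Hi Hb.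
  assert (H : plus (RInt g 0 b) (RInt g b c) = RInt g 0 c).
  { apply (RInt_Chasles (V:=R_CompleteNormedModule) g 0 b c).
    - apply (ex_RInt_Chasles_1 g 0 b c); auto; lra.
    - apply (ex_RInt_Chasles_2 g 0 b c); auto; lra. }
  change (RInt g 0 b + RInt g b c = RInt g 0 c) in H. lra.
Qed.

Lemma is_lim_le_p_infty F G (l m : R) :
  is_lim F p_infty l -> is_lim G p_infty m ->
  (exists B, forall b, B < b -> F b <= G b) -> l <= m.
Proof. intros HF HG HB. exact (is_lim_le_loc F G p_infty l m HB HF HG). Qed.

Lemma is_RInt_0_infty_partial_bounds g L :
  (forall x, 0 <= x -> 0 <= g x) -> is_RInt_0_infty g L ->
  forall b, 0 <= b -> 0 <= RInt g 0 b <= L.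
Proof.
  intros Hp [Hi Hl] b Hb. split.
  - apply RInt_ge_0; [lra|now apply Hi|intros; apply Hp; lra].
  - apply (is_lim_le_p_infty (fun _ => RInt g 0 b) _ _ _ (is_lim_const _ _) Hl).
    exists b. intros c Hc. apply RInt_0_nondecreasing; auto; lra.
Qed.

Lemma is_lim_nondecreasing_bounded (F : R -> R) K :
  (forall a b, 0 <= a <= b -> F a <= F b) -> (forall b, 0 <= b -> F b <= K) ->
  exists l : R, is_lim F p_infty l.
Proof.
  intros Hm Hb.
  set (E := fun v => exists b, 0 <= b /\ v = F b).
  assert (HE : bound E) by (exists K; intros v [b [Hb0 ->]]; auto).
  assert (Hne : exists v, E v) by (exists (F 0), 0; split; [lra|reflexivity]).
  destruct (completeness E HE Hne) as [l [Hub Hlub]].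
  exists l. apply is_lim_spec. intros eps.
  destruct (classic (exists b0, 0 <= b0 /\ l - eps < F b0)) as [[b0 [Hb0 Hlt]]|Hn].
  - exists b0. intros b Hbb.
    assert (F b0 <= F b) by (apply Hm; lra).
    assert (F b <= l) by (apply Hub; exists b; split; [lra|reflexivity]).
    apply Rabs_def1; lra.
  - exfalso. assert (l <= l - eps); [|pose proof (cond_pos eps); lra].
    apply Hlub. intros v [b [Hb0 ->]].
    destruct (Rle_or_lt (F b) (l - eps)); auto. exfalso; eauto.
Qed.

Lemma is_RInt_0_infty_dominated f g L :
  (forall b, 0 <= b -> ex_RInt f 0 b) -> (forall x, 0 <= x -> 0 <= f x <= g x) ->
  is_RInt_0_infty g L -> is_RInt_0_infty f (RInt_0_infty f).
Proof.
  intros Hfi Hd Hg.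
  assert (Hgp : forall x, 0 <= x -> 0 <= g x) by (intros x Hx; specialize (Hd x Hx); lra).
  destruct (is_lim_nondecreasing_bounded (fun b => RInt f 0 b) L) as [l Hl].
  - intros a b Hab. apply RInt_0_nondecreasing; auto. intros x Hx; apply Hd; auto.
  - intros b Hb. apply Rle_trans with (RInt g 0 b).
    + apply RInt_le; [lra|auto|apply Hg; auto|intros x Hx; apply Hd; lra].
    + apply (is_RInt_0_infty_partial_bounds g L Hgp Hg b Hb).
  - assert (Hf : is_RInt_0_infty f l) by (split; assumption).
    now rewrite (is_RInt_0_infty_unique _ _ Hf).
Qed.

Lemma is_lim_scal_0 (f : R -> R) c : is_lim f p_infty 0 -> is_lim (fun T => c * f T) p_infty 0.
Proof.
  intros H. replace (Finite 0) with (Rbar_mult c 0) by (simpl; f_equal; ring).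
  now apply is_lim_scal_l.
Qed.

Lemma is_RInt_0_infty_tail_le g w c L W :
  (forall x, 0 <= x -> 0 <= g x <= c * w x) -> 0 <= c -> (forall x, 0 <= x -> 0 <= w x) ->
  is_RInt_0_infty g L -> is_RInt_0_infty w W ->
  forall b, 0 <= b -> 0 <= L - RInt g 0 b <= c * (W - RInt w 0 b).
Proof.
  intros Hd Hc Hwp Hg Hw b Hb.
  assert (Hgp : forall x, 0 <= x -> 0 <= g x) by (intros x Hx; specialize (Hd x Hx); lra).
  destruct Hg as [Hgi Hgl]. pose proof Hw as [Hwi _].
  split.
  - assert (RInt g 0 b <= L); [|lra].
    apply (is_lim_le_p_infty (fun _ => RInt g 0 b) _ _ _ (is_lim_const _ _) Hgl).
    exists b. intros c' Hc'. apply RInt_0_nondecreasing; auto; lra.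
  - assert (L <= RInt g 0 b + c * (W - RInt w 0 b)); [|lra].
    apply (is_lim_le_p_infty _ (fun _ => RInt g 0 b + c * (W - RInt w 0 b)) _ _ Hgl (is_lim_const _ _)).
    exists b. intros c' Hc'.
    rewrite <- (Rplus_minus (RInt g 0 b) (RInt g 0 c')), <- RInt_0_sub by (try apply Hgi; lra).
    assert (Hgbc : ex_RInt g b c') by (apply (ex_RInt_Chasles_2 g 0); [lra|apply Hgi; lra]).
    assert (Hwbc : ex_RInt w b c') by (apply (ex_RInt_Chasles_2 w 0); [lra|apply Hwi; lra]).
    assert (Hle : RInt g b c' <= RInt (fun x => c * w x) b c').
    { apply RInt_le; [lra|exact Hgbc|now apply (ex_RInt_scal w)|intros x Hx; apply Hd; lra]. }
    rewrite (RInt_scal (V:=R_CompleteNormedModule) w) in Hle by exact Hwbc.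
    rewrite (RInt_0_sub w) in Hle by (try apply Hwi; lra).
    pose proof (is_RInt_0_infty_partial_bounds w W Hwp Hw c' ltac:(lra)).
    change (scal c (RInt w 0 c' - RInt w 0 b)) with (c * (RInt w 0 c' - RInt w 0 b)) in Hle.
    nra.
Qed.

Lemma is_lim_tail w W c : is_RInt_0_infty w W ->
  is_lim (fun b => c * (W - RInt w 0 b)) p_infty 0.
Proof.
  intros [_ Hw]. apply is_lim_scal_0.
  replace (Finite 0) with (Finite (W - W)) by (f_equal; ring).
  apply is_lim_minus'; [apply is_lim_const|exact Hw].
Qed.

Lemma RInt_0_le_scal u w c T : 0 <= T -> ex_RInt u 0 T -> ex_RInt w 0 T ->
  (forall t, 0 <= t <= T -> 0 <= u t <= c * w t) -> 0 <= RInt u 0 T <= c * RInt w 0 T.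
Proof.
  intros HT Hu Hw Hb. split.
  - apply RInt_ge_0; [exact HT|exact Hu|intros; apply Hb; lra].
  - rewrite <- (RInt_scal (V:=R_CompleteNormedModule) w) by exact Hw.
    apply RInt_le; [exact HT|exact Hu|now apply (ex_RInt_scal w)|intros; apply Hb; lra].
Qed.

(** * Exponentially damped functions *)

Lemma continuous_of_ex_derive (f : R -> R) x : ex_derive f x -> continuous f x.
Proof. exact (ex_derive_continuous (K:=R_AbsRing) (V:=R_NormedModule) f x). Qed.

Lemma is_lim_scal_p_infty c : 0 < c -> is_lim (fun T => c * T) p_infty p_infty.
Proof.
  intros Hc. assert (H := is_lim_scal_l (fun T => T) c p_infty p_infty (is_lim_id _)).
  simpl in H. destruct (Rle_dec 0 c) as [Hle|]; [|lra].
  destruct (Rle_lt_or_eq_dec 0 c Hle); [exact H|lra].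
Qed.

Lemma is_lim_exp_neg b : 0 < b -> is_lim (fun T => exp (- (b * T))) p_infty 0.
Proof.
  intros Hb. apply (is_lim_comp exp (fun T => - (b * T)) p_infty 0 m_infty).
  - exact is_lim_exp_m.
  - exact (is_lim_opp (fun T => b * T) p_infty p_infty (is_lim_scal_p_infty b Hb)).
  - exists 0. intros; discriminate.
Qed.

Lemma is_lim_sum_0 (F : nat -> R -> R) n :
  (forall i, (i <= n)%nat -> is_lim (F i) p_infty 0) ->
  is_lim (fun T => sum_f_R0 (fun i => F i T) n) p_infty 0.
Proof.
  induction n as [|n IH]; intros H; simpl.
  - apply H; lia.
  - replace (Finite 0) with (Finite (0 + 0)) by (f_equal; ring).
    apply is_lim_plus'; [apply IH; intros|]; apply H; lia.
Qed.

Lemma pow_div_fact_le_exp t n : 0 <= t -> t ^ n / INR (fact n) <= exp t.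
Proof.
  intros Ht. apply Rle_trans with (sum_f_R0 (fun k => t ^ k / INR (fact k)) n).
  - destruct n as [|n]; simpl; [lra|].
    assert (0 <= sum_f_R0 (fun k => t ^ k / INR (fact k)) n); [|lra].
    apply cond_pos_sum. intros k. apply Rdiv_le_0_compat; [apply pow_le; lra|apply INR_fact_lt_0].
  - now apply exp_ge_taylor.
Qed.

(* Half of the decay rate absorbs the polynomial factor. *)
Lemma pow_mul_exp_neg_le n b T : 0 < b -> 0 <= T ->
  T ^ n * exp (- (b * T)) <= INR (fact n) * (2 / b) ^ n * exp (- (b / 2 * T)).
Proof.
  intros Hb HT.
  assert (H := pow_div_fact_le_exp (b / 2 * T) n ltac:(apply Rmult_le_pos; lra)).
  assert (Hf := INR_fact_lt_0 n).
  assert (Hpow : T ^ n = (2 / b) ^ n * (b / 2 * T) ^ n).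
  { rewrite <- Rpow_mult_distr. f_equal. field. lra. }
  assert (HT' : T ^ n <= INR (fact n) * (2 / b) ^ n * exp (b / 2 * T)).
  { rewrite Hpow. assert (0 < (2 / b) ^ n) by (apply pow_lt, Rdiv_lt_0_compat; lra).
    apply (Rmult_le_compat_r (INR (fact n))) in H; [|lra].
    unfold Rdiv at 1 in H. rewrite Rmult_assoc, Rinv_l, Rmult_1_r in H by lra. nra. }
  replace (exp (- (b / 2 * T))) with (exp (b / 2 * T) * exp (- (b * T)))
    by (rewrite <- exp_plus; f_equal; field).
  pose proof (exp_pos (- (b * T))). nra.
Qed.

Lemma is_lim_pow_mul_exp_neg n b : 0 < b -> is_lim (fun T => T ^ n * exp (- (b * T))) p_infty 0.
Proof.
  intros Hb.
  apply (is_lim_le_le_loc (fun _ => 0) (fun T => INR (fact n) * (2 / b) ^ n * exp (- (b / 2 * T)))).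
  - exists 0. intros T HT. split; [|apply pow_mul_exp_neg_le; lra].
    apply Rmult_le_pos; [apply pow_le; lra|left; apply exp_pos].
  - apply is_lim_const.
  - apply is_lim_scal_0, is_lim_exp_neg. lra.
Qed.

Lemma is_lim_affine_pow_mul_exp_neg n lam g : 0 < lam -> 0 < g ->
  is_lim (fun T => exp (- (lam * T)) * (1 + g * T) ^ n) p_infty 0.
Proof.
  intros Hl Hg.
  apply (is_lim_le_le_loc (fun _ => 0) (fun T => (2 * g) ^ n * (T ^ n * exp (- (lam * T))))).
  - exists (/ g). intros T HT.
    assert (Hg1 : 1 < g * T) by (apply (Rmult_lt_compat_l g) in HT; [rewrite Rinv_r in HT|]; lra).
    assert (H1 : (1 + g * T) ^ n <= (2 * g) ^ n * T ^ n)
      by (rewrite <- Rpow_mult_distr; apply pow_incr; lra).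
    pose proof (exp_pos (- (lam * T))).
    split; [apply Rmult_le_pos; [lra|apply pow_le; lra]|nra].
  - apply is_lim_const.
  - apply is_lim_scal_0, is_lim_pow_mul_exp_neg, Hl.
Qed.

Lemma is_RInt_0_infty_exp_neg a : 0 < a -> is_RInt_0_infty (fun x => exp (- (a * x))) (/ a).
Proof.
  intros Ha.
  assert (HR : forall b, is_RInt (fun x => exp (- (a * x))) 0 b (/ a - / a * exp (- (a * b)))).
  { intros b. replace (/ a - / a * exp (- (a * b))) with
      (minus (- / a * exp (- (a * b))) (- / a * exp (- (a * 0)))).
    - apply (is_RInt_derive (fun x => - / a * exp (- (a * x)))).
      + intros x _. auto_derive; [auto|field; lra].
      + intros x _. apply continuous_of_ex_derive. auto_derive. auto.
    - unfold minus, plus, opp; simpl. rewrite Rmult_0_r, Ropp_0, exp_0. ring. }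
  split.
  - intros b _. eexists; apply HR.
  - apply (is_lim_ext (fun b => / a - / a * exp (- (a * b)))).
    + intros b. symmetry. apply is_RInt_unique, HR.
    + replace (Finite (/ a)) with (Finite (/ a - 0)) by (f_equal; ring).
      apply is_lim_minus'; [apply is_lim_const|apply is_lim_scal_0, is_lim_exp_neg, Ha].
Qed.

(* [- exp (- lam y) * affine_moment lam g i (1 + g y)] is an antiderivative of
   [exp (- lam y) * (1 + g y) ^ i]; the recursion is one integration by parts. *)
Fixpoint affine_moment (lam g : R) (i : nat) (u : R) : R :=
  match i with
  | O => / lam
  | S j => u ^ S j / lam + INR (S j) * g / lam * affine_moment lam g j u
  end.

Lemma is_derive_affine_moment lam g i y : lam <> 0 ->
  is_derive (fun y => - exp (- (lam * y)) * affine_moment lam g i (1 + g * y)) y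
    (exp (- (lam * y)) * (1 + g * y) ^ i).
Proof.
  intros Hl. revert y. induction i as [|i IH]; intros y.
  - simpl. auto_derive; [auto|field; auto].
  - apply (is_derive_ext (fun y => - exp (- (lam * y)) * (1 + g * y) ^ S i / lam
       + INR (S i) * g / lam * (- exp (- (lam * y)) * affine_moment lam g i (1 + g * y)))).
    { intros t. cbn [affine_moment]. match goal with |- ?a = ?b => change (@eq R a b) end. field. auto. }
    evar (d : R).
    replace (exp (- (lam * y)) * (1 + g * y) ^ S i) with
      (d + INR (S i) * g / lam * (exp (- (lam * y)) * (1 + g * y) ^ i)).
    + apply (is_derive_plus (K:=R_AbsRing) (V:=R_NormedModule)); [|now apply is_derive_scal].
      unfold d. auto_derive; [auto|reflexivity].
    + unfold d. change (match i with 0%nat => 1 | S _ => INR i + 1 end) with (INR (S i)).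
      match goal with |- ?a = ?b => change (@eq R a b) end. simpl pow. field. auto.
Qed.

Lemma is_lim_affine_moment lam g i : 0 < lam -> 0 < g ->
  is_lim (fun T => exp (- (lam * T)) * affine_moment lam g i (1 + g * T)) p_infty 0.
Proof.
  intros Hl Hg. induction i as [|i IH]; cbn [affine_moment].
  - apply (is_lim_ext (fun T => / lam * exp (- (lam * T)))); [intros; ring|].
    apply is_lim_scal_0, is_lim_exp_neg, Hl.
  - apply (is_lim_ext (fun T => / lam * (exp (- (lam * T)) * (1 + g * T) ^ S i)
       + INR (S i) * g / lam * (exp (- (lam * T)) * affine_moment lam g i (1 + g * T)))).
    { intros T. field. lra. }
    replace (Finite 0) with (Finite (0 + 0)) by (f_equal; ring).
    apply is_lim_plus'; apply is_lim_scal_0; [now apply is_lim_affine_pow_mul_exp_neg|exact IH].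
Qed.

Lemma is_RInt_0_infty_affine_moment lam g i : 0 < lam -> 0 < g ->
  is_RInt_0_infty (fun y => exp (- (lam * y)) * (1 + g * y) ^ i) (affine_moment lam g i 1).
Proof.
  intros Hl Hg.
  set (F := fun y => - exp (- (lam * y)) * affine_moment lam g i (1 + g * y)).
  assert (HR : forall b, is_RInt (fun y => exp (- (lam * y)) * (1 + g * y) ^ i) 0 b
                          (affine_moment lam g i 1 - exp (- (lam * b)) * affine_moment lam g i (1 + g * b))).
  { intros b. replace (_ - _) with (minus (F b) (F 0)).
    - apply (is_RInt_derive F).
      + intros x _. apply is_derive_affine_moment. lra.
      + intros x _. apply continuous_of_ex_derive. auto_derive. auto.
    - unfold F, minus, plus, opp; simpl. rewrite Rmult_0_r, Ropp_0, exp_0, Rmult_0_r, Rplus_0_r. ring. }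
  split; [intros b _; eexists; apply HR|].
  apply (is_lim_ext (fun b => affine_moment lam g i 1 - exp (- (lam * b)) * affine_moment lam g i (1 + g * b))).
  { intros b. symmetry. apply is_RInt_unique, HR. }
  replace (Finite (affine_moment lam g i 1)) with (Finite (affine_moment lam g i 1 - 0)) by (f_equal; ring).
  apply is_lim_minus'; [apply is_lim_const|now apply is_lim_affine_moment].
Qed.

Lemma affine_moment_1 lam g i : lam <> 0 ->
  affine_moment lam g i 1 = sum_f_R0 (fun j => INR (fact i) / INR (fact (i - j)) * g ^ j / lam ^ (j + 1)) i.
Proof.
  intros Hl. induction i as [|i IH].
  - simpl. field. auto.
  - cbn [affine_moment]. rewrite IH, (decomp_sum _ (S i)) by lia.
    simpl pred. rewrite scal_sum.
    replace (1 ^ S i / lam) with (INR (fact (S i)) / INR (fact (S i - 0)) * g ^ 0 / lam ^ (0 + 1)).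
    2: { rewrite Nat.sub_0_r, pow1, pow_O, Nat.add_0_l, pow_1. field. split; [auto|apply INR_fact_neq_0]. }
    f_equal. apply sum_eq. intros j Hj.
    replace (S i - S j)%nat with (i - j)%nat by lia.
    assert (INR (fact (i - j)) <> 0) by apply INR_fact_neq_0.
    assert (lam ^ (j + 1) <> 0) by (apply pow_nonzero; auto).
    rewrite fact_simpl, mult_INR. replace (S j + 1)%nat with (S (j + 1)) by lia. simpl pow. field. auto.
Qed.

(** * Fubini's theorem on the quadrant *)

Lemma continuous_of_eps (g : R -> R) t :
  (forall eps, 0 < eps -> exists d, 0 < d /\ forall y, Rabs (y - t) < d -> Rabs (g y - g t) < eps) ->
  continuous g t.
Proof.
  intros H. apply filterlim_locally. intros eps.
  destruct (H eps (cond_pos eps)) as [d [Hd Hy]].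
  exists (mkposreal d Hd). intros y Hb. exact (Hy y Hb).
Qed.

Lemma continuity_2d_pt_swap f x y :
  continuity_2d_pt f x y -> continuity_2d_pt (fun u v => f v u) y x.
Proof. intros H eps. destruct (H eps) as [d Hd]. exists d. intros u v Hu Hv. now apply Hd. Qed.

Lemma continuity_2d_pt_continuous_fst f x y :
  continuity_2d_pt f x y -> continuous (fun u => f u y) x.
Proof.
  intros H. apply continuous_of_eps. intros eps He. destruct (H (mkposreal eps He)) as [d Hd].
  exists d. split; [apply cond_pos|]. intros u Hu. apply Hd; auto.
  rewrite Rminus_diag, Rabs_R0. apply cond_pos.
Qed.

Lemma continuity_2d_pt_continuous_snd f x y :
  continuity_2d_pt f x y -> continuous (fun v => f x v) y.
Proof.
  intros H. apply (continuity_2d_pt_continuous_fst (fun u v => f v u)).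
  now apply continuity_2d_pt_swap.
Qed.

Lemma ex_RInt_continuous_R (f : R -> R) a b : (forall x, continuous f x) -> ex_RInt f a b.
Proof. intros H. apply (ex_RInt_continuous (V:=R_CompleteNormedModule)). intros; apply H. Qed.

Section ParametricIntegral.
Variable f : R -> R -> R.
Hypothesis f_cont : forall x y, continuity_2d_pt f x y.

Let ex_RInt_fst v a b : ex_RInt (fun x => f x v) a b.
Proof. apply ex_RInt_continuous_R. intros x. now apply continuity_2d_pt_continuous_fst. Qed.

(* Uniform continuity of [f] on the compact segment [[a, b] x {t}]. *)
Lemma RInt_param_eps a b t : a <= b ->
  forall eps, 0 < eps -> exists d, 0 < d /\ forall y, Rabs (y - t) < d ->
    Rabs (RInt (fun x => f x y) a b - RInt (fun x => f x t) a b) < eps.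
Proof.
  intros Hab eps He.
  set (e' := eps / (b - a + 1)).
  assert (He' : 0 < e') by (apply Rdiv_lt_0_compat; lra).
  destruct (uniform_continuity_2d_1d f a b t (fun x _ => f_cont x t) (mkposreal e' He')) as [d Hd].
  exists d. split; [apply cond_pos|]. intros y Hy.
  rewrite <- (RInt_minus (V:=R_CompleteNormedModule) (fun x => f x y) (fun x => f x t)) by apply ex_RInt_fst.
  apply Rle_lt_trans with ((b - a) * e').
  - apply abs_RInt_le_const; [exact Hab|now apply (ex_RInt_minus (fun x => f x y))|].
    intros x Hx. left. pose proof (cond_pos d). apply Rabs_def2 in Hy.
    apply (Hd x t x y); try lra. rewrite Rminus_diag, Rabs_R0. apply cond_pos.
  - unfold e'. apply Rmult_lt_reg_r with (b - a + 1); [lra|].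
    replace ((b - a) * (eps / (b - a + 1)) * (b - a + 1)) with ((b - a) * eps) by (field; lra). nra.
Qed.

Lemma continuous_RInt_param a b t : continuous (fun y => RInt (fun x => f x y) a b) t.
Proof.
  apply continuous_of_eps. intros eps He.
  destruct (Rle_or_lt a b) as [Hab|Hab]; [now apply RInt_param_eps|].
  destruct (RInt_param_eps b a t ltac:(lra) eps He) as [d [Hd H]].
  exists d. split; [exact Hd|]. intros y Hy.
  rewrite <- (opp_RInt_swap (fun x => f x y)), <- (opp_RInt_swap (fun x => f x t)) by apply ex_RInt_fst.
  unfold opp; simpl. rewrite <- Rabs_Ropp.
  replace (- (- RInt (fun x => f x y) b a - - RInt (fun x => f x t) b a))
    with (RInt (fun x => f x y) b a - RInt (fun x => f x t) b a) by ring.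
  now apply H.
Qed.

End ParametricIntegral.

(* Both sides, as functions of [T], vanish at 0 and have the same derivative. *)
Lemma RInt_swap_rectangle f A T : (forall x y, continuity_2d_pt f x y) ->
  RInt (fun y => RInt (fun x => f x y) 0 A) 0 T = RInt (fun x => RInt (fun y => f x y) 0 T) 0 A.
Proof.
  intros Hc.
  assert (Hc' : forall x y, continuity_2d_pt (fun u v => f v u) x y)
    by (intros; now apply continuity_2d_pt_swap).
  set (Psi := fun t => RInt (fun x => RInt (fun y => f x y) 0 t) 0 A).
  assert (Hdy : forall x t, is_derive (fun u => RInt (fun y => f x y) 0 u) t (f x t)).
  { intros x t. apply (is_derive_RInt (fun y => f x y) (RInt (fun y => f x y) 0) 0 t).
    - apply filter_forall. intros b. apply (RInt_correct (V:=R_CompleteNormedModule)).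
      apply ex_RInt_continuous_R. intros; now apply continuity_2d_pt_continuous_snd.
    - now apply continuity_2d_pt_continuous_snd. }
  assert (HD : forall t, is_derive Psi t (RInt (fun x => f x t) 0 A)).
  { intros t. unfold Psi.
    replace (RInt (fun x => f x t) 0 A) with
      (RInt (fun x => Derive (fun u => RInt (fun y => f x y) 0 u) t) 0 A)
      by (apply RInt_ext; intros x _; apply is_derive_unique, Hdy).
    apply (is_derive_RInt_param (fun t x => RInt (fun y => f x y) 0 t) 0 A t).
    - apply filter_forall. intros t0 x _. eexists; apply Hdy.
    - intros x _. apply (continuity_2d_pt_ext (fun u v => f v u)); [|apply Hc'].
      intros u v. symmetry. apply is_derive_unique, Hdy.
    - apply filter_forall. intros t0. apply ex_RInt_continuous_R. intros x.
      now apply (continuous_RInt_param (fun u v => f v u)). }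
  assert (E := RInt_Derive Psi 0 T).
  rewrite (RInt_ext (Derive Psi) (fun t => RInt (fun x => f x t) 0 A)) in E
    by (intros; apply is_derive_unique, HD).
  rewrite E.
  - unfold Psi. rewrite (RInt_ext (fun x => RInt (fun y => f x y) 0 0) (fun _ => 0))
      by (intros; apply (RInt_point (V:=R_CompleteNormedModule))).
    rewrite RInt_const. unfold scal; simpl; unfold mult; simpl. ring.
  - intros x _. eexists; apply HD.
  - intros x _. apply (continuous_ext (fun t => RInt (fun x => f x t) 0 A)).
    + intros; symmetry; apply is_derive_unique, HD.
    + now apply continuous_RInt_param.
Qed.

Section QuadrantFubini.
Variables (f : R -> R -> R) (D E h : R -> R) (Dt Et Emax dl H : R).
Hypothesis f_cont : forall x y, continuity_2d_pt f x y.
Hypothesis dl_pos : 0 < dl.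
Hypothesis D_cont : forall x, continuous D x.
Hypothesis E_cont : forall y, continuous E y.
Hypothesis D_nonneg : forall x, 0 <= x -> 0 <= D x.
(* Bounds on [[-dl, +oo)] rather than [[0, +oo)] make [G] continuous at [y = 0], which
   [ex_RInt_continuous] requires. *)
Hypothesis E_bounds : forall y, -dl <= y -> 0 <= E y <= Emax.
Hypothesis D_int : is_RInt_0_infty D Dt.
Hypothesis E_int : is_RInt_0_infty E Et.
Hypothesis f_bounds : forall x y, 0 <= x -> -dl <= y -> 0 <= f x y <= D x * E y.
Hypothesis h_int : forall x, 0 <= x -> is_RInt_0_infty (fun y => f x y) (h x).
Hypothesis h_total : is_RInt_0_infty h H.

Let G y := RInt_0_infty (fun x => f x y).

Let ex_RInt_fst y b : ex_RInt (fun x => f x y) 0 b.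
Proof. apply ex_RInt_continuous_R. intros; now apply continuity_2d_pt_continuous_fst. Qed.

Let RInt_D_bounds b : 0 <= b -> 0 <= RInt D 0 b <= Dt.
Proof. now apply is_RInt_0_infty_partial_bounds. Qed.

Let RInt_E_bounds b : 0 <= b -> 0 <= RInt E 0 b <= Et.
Proof. apply is_RInt_0_infty_partial_bounds; [intros y Hy; apply E_bounds; lra|exact E_int]. Qed.

Lemma inner_is_RInt_0_infty y : -dl <= y -> is_RInt_0_infty (fun x => f x y) (G y).
Proof.
  intros Hy. apply (is_RInt_0_infty_dominated _ (fun x => E y * D x) (E y * Dt)).
  - intros; apply ex_RInt_fst.
  - intros x Hx. rewrite Rmult_comm. now apply f_bounds.
  - now apply is_RInt_0_infty_scal.
Qed.

Lemma inner_tail y b : -dl <= y -> 0 <= b ->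
  0 <= G y - RInt (fun x => f x y) 0 b <= E y * (Dt - RInt D 0 b).
Proof.
  intros Hy. apply (is_RInt_0_infty_tail_le (fun x => f x y) D (E y) (G y) Dt); auto.
  - intros x Hx. rewrite Rmult_comm. now apply f_bounds.
  - now apply E_bounds.
  - now apply inner_is_RInt_0_infty.
Qed.

Lemma outer_tail x b : 0 <= x -> 0 <= b ->
  0 <= h x - RInt (fun y => f x y) 0 b <= D x * (Et - RInt E 0 b).
Proof.
  intros Hx. apply (is_RInt_0_infty_tail_le (fun y => f x y) E (D x) (h x) Et); auto.
  - intros y Hy. apply f_bounds; lra.
  - intros y Hy. apply E_bounds; lra.
Qed.

Lemma G_continuous y0 : -dl < y0 -> continuous G y0.
Proof.
  intros Hy0. apply continuous_of_eps. intros eps He.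
  assert (Hlim := is_lim_tail D Dt Emax D_int). apply is_lim_spec in Hlim.
  destruct (Hlim (mkposreal (eps / 3) ltac:(lra))) as [B HB]; simpl in HB.
  set (A := Rmax 0 B + 1).
  assert (HA0 : 0 <= A) by (unfold A; pose proof (Rmax_l 0 B); lra).
  assert (Htail : forall y, -dl <= y -> Rabs (G y - RInt (fun x => f x y) 0 A) < eps / 3).
  { intros y Hy. destruct (inner_tail y A Hy HA0), (E_bounds y Hy), (RInt_D_bounds A HA0).
    assert (HBA := HB A ltac:(unfold A; pose proof (Rmax_r 0 B); lra)).
    rewrite Rminus_0_r, Rabs_pos_eq in HBA by (apply Rmult_le_pos; lra).
    rewrite Rabs_pos_eq by lra.
    assert (E y * (Dt - RInt D 0 A) <= Emax * (Dt - RInt D 0 A)) by (apply Rmult_le_compat_r; lra).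
    lra. }
  destruct (RInt_param_eps f f_cont 0 A y0 HA0 (eps / 3) ltac:(lra)) as [d [Hd Hdd]].
  exists (Rmin d (y0 + dl)). split; [apply Rmin_glb_lt; lra|].
  intros y Hy. pose proof (Rmin_l d (y0 + dl)). pose proof (Rmin_r d (y0 + dl)).
  assert (Hyy : -dl <= y) by (apply Rabs_def2 in Hy; lra).
  specialize (Hdd y ltac:(lra)).
  assert (h1 := Htail y Hyy). assert (h2 := Htail y0 ltac:(lra)).
  apply Rabs_def2 in h1, h2, Hdd. apply Rabs_def1; lra.
Qed.

Lemma ex_RInt_G T : 0 <= T -> ex_RInt G 0 T.
Proof.
  intros HT. apply (ex_RInt_continuous (V:=R_CompleteNormedModule)). intros z Hz.
  rewrite Rmin_left, Rmax_right in Hz by lra. apply G_continuous. lra.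
Qed.

(* Truncate the inner integral at [A] and the outer one at [T], then swap on [[0,A] x [0,T]]. *)
Lemma RInt_G_approx A T : 0 <= A -> 0 <= T ->
  Rabs (RInt G 0 T - RInt h 0 A) <= Et * (Dt - RInt D 0 A) + Dt * (Et - RInt E 0 T).
Proof.
  intros HA HT.
  set (GA := fun y => RInt (fun x => f x y) 0 A).
  set (hT := fun x => RInt (fun y => f x y) 0 T).
  assert (GAi : ex_RInt GA 0 T) by (apply ex_RInt_continuous_R; intros; now apply continuous_RInt_param).
  assert (hTi : ex_RInt hT 0 A).
  { apply ex_RInt_continuous_R. intros. apply (continuous_RInt_param (fun u v => f v u)).
    intros; now apply continuity_2d_pt_swap. }
  assert (Hswap : RInt GA 0 T = RInt hT 0 A) by now apply RInt_swap_rectangle.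
  assert (HG : 0 <= RInt (fun y => G y - GA y) 0 T <= (Dt - RInt D 0 A) * RInt E 0 T).
  { apply RInt_0_le_scal; auto.
    - apply (ex_RInt_minus (V:=R_NormedModule) G GA); [apply ex_RInt_G, HT|exact GAi].
    - apply ex_RInt_continuous_R, E_cont.
    - intros y Hy. rewrite Rmult_comm. apply inner_tail; lra. }
  assert (Hh : 0 <= RInt (fun x => h x - hT x) 0 A <= (Et - RInt E 0 T) * RInt D 0 A).
  { apply RInt_0_le_scal; auto.
    - apply (ex_RInt_minus (V:=R_NormedModule) h hT); [apply (proj1 h_total), HA|exact hTi].
    - apply ex_RInt_continuous_R, D_cont.
    - intros x Hx. rewrite Rmult_comm. apply outer_tail; lra. }
  rewrite (RInt_minus (V:=R_CompleteNormedModule) G GA) in HG by (auto; now apply ex_RInt_G).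
  rewrite (RInt_minus (V:=R_CompleteNormedModule) h hT) in Hh by (auto; now apply (proj1 h_total)).
  change (minus ?a ?b) with (a - b) in HG, Hh.
  destruct (RInt_D_bounds A HA), (RInt_E_bounds T HT).
  assert ((Dt - RInt D 0 A) * RInt E 0 T <= Et * (Dt - RInt D 0 A)) by nra.
  assert ((Et - RInt E 0 T) * RInt D 0 A <= Dt * (Et - RInt E 0 T)) by nra.
  apply Rabs_le. lra.
Qed.

Lemma RInt_G_near T : 0 <= T -> Rabs (RInt G 0 T - H) <= Dt * (Et - RInt E 0 T).
Proof.
  intros HT.
  apply (is_lim_le_p_infty (fun A => Rabs (RInt G 0 T - RInt h 0 A))
           (fun A => Et * (Dt - RInt D 0 A) + Dt * (Et - RInt E 0 T))).
  - apply (is_lim_Rabs _ _ (RInt G 0 T - H)).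
    apply is_lim_minus'; [apply is_lim_const|apply (proj2 h_total)].
  - replace (Finite (Dt * (Et - RInt E 0 T))) with (Finite (0 + Dt * (Et - RInt E 0 T)))
      by (f_equal; ring).
    apply is_lim_plus'; [apply is_lim_tail, D_int|apply is_lim_const].
  - exists 0. intros A HA. apply RInt_G_approx; lra.
Qed.

Lemma is_RInt_0_infty_swap : is_RInt_0_infty G H.
Proof.
  split; [exact ex_RInt_G|].
  apply (is_lim_le_le_loc (fun T => H - Dt * (Et - RInt E 0 T)) (fun T => H + Dt * (Et - RInt E 0 T))).
  - exists 0. intros T HT. apply Rabs_le_between'. apply RInt_G_near. lra.
  - replace (Finite H) with (Finite (H - 0)) by (f_equal; ring).
    apply is_lim_minus'; [apply is_lim_const|apply is_lim_tail, E_int].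
  - replace (Finite H) with (Finite (H + 0)) by (f_equal; ring).
    apply is_lim_plus'; [apply is_lim_const|apply is_lim_tail, E_int].
Qed.

End QuadrantFubini.

(** * The Gamma tail *)

(* [P(Z > z)] for [Z ~ Gamma(N+1, 1)]. *)
Definition gamma_tail (N : nat) (z : R) : R :=
  sum_f_R0 (fun i => exp (- z) * z ^ i / INR (fact i)) N.

Lemma is_derive_gamma_tail N z :
  is_derive (gamma_tail N) z (- (exp (- z) * z ^ N / INR (fact N))).
Proof.
  induction N as [|N IH].
  - unfold gamma_tail; simpl. auto_derive; [auto|field].
  - apply (is_derive_ext (fun z => gamma_tail N z + exp (- z) * z ^ S N / INR (fact (S N))));
      [reflexivity|].
    evar (d : R).
    replace (- (exp (- z) * z ^ S N / INR (fact (S N)))) with ((- (exp (- z) * z ^ N / INR (fact N))) + d).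
    + apply (is_derive_plus (K:=R_AbsRing) (V:=R_NormedModule)); [exact IH|].
      unfold d. auto_derive; [auto|reflexivity].
    + unfold d. change (match N with 0%nat => 1 | S _ => INR N + 1 end) with (INR (S N)).
      assert (INR (fact N) <> 0) by apply INR_fact_neq_0.
      assert (INR (S N) <> 0) by (apply not_0_INR; lia).
      change (fact N + N * fact N)%nat with (fact (S N)).
      rewrite fact_simpl, mult_INR. simpl pow. field. auto.
Qed.

Lemma continuous_gamma_tail N z : continuous (gamma_tail N) z.
Proof. apply continuous_of_ex_derive. eexists; apply is_derive_gamma_tail. Qed.

Lemma exp_neg_pow_div_fact_le w i : 0 <= w ->
  exp (- w) * w ^ i / INR (fact i) <= 2 ^ i * exp (- (w / 2)).
Proof.
  intros Hw. assert (H := pow_div_fact_le_exp (w / 2) i ltac:(lra)).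
  assert (Hf := INR_fact_lt_0 i).
  replace (exp (- w) * w ^ i / INR (fact i)) with (2 ^ i * exp (- w) * ((w / 2) ^ i / INR (fact i))).
  2: { unfold Rdiv. rewrite Rpow_mult_distr, pow_inv. field. split; [lra|apply pow_nonzero; lra]. }
  replace (exp (- (w / 2))) with (exp (- w) * exp (w / 2)) by (rewrite <- exp_plus; f_equal; field).
  assert (0 < 2 ^ i * exp (- w)) by (apply Rmult_lt_0_compat; [apply pow_lt; lra | apply exp_pos]).
  rewrite <- Rmult_assoc. apply Rmult_le_compat_l; lra.
Qed.

Lemma gamma_tail_bounds N w a : 0 <= a <= w ->
  0 <= gamma_tail N w <= sum_f_R0 (pow 2) N * exp (- (a / 2)).
Proof.
  intros Ha. unfold gamma_tail. split.
  - apply cond_pos_sum. intros i. apply Rdiv_le_0_compat; [|apply INR_fact_lt_0].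
    apply Rmult_le_pos; [left; apply exp_pos|apply pow_le; lra].
  - rewrite Rmult_comm, scal_sum. apply sum_Rle. intros i _.
    apply Rle_trans with (2 ^ i * exp (- (w / 2))); [apply exp_neg_pow_div_fact_le; lra|].
    apply Rmult_le_compat_l; [apply pow_le; lra|].
    destruct (Req_dec w a) as [->|]; [lra|left; apply exp_increasing; lra].
Qed.

Lemma is_lim_ln_gamma_tail N c : 0 < c ->
  is_lim (fun B => - ln (1 + c * B) * gamma_tail N B) p_infty 0.
Proof.
  intros Hc.
  set (bound := fun B => sum_f_R0 (fun i => / INR (fact i) * (B ^ S i * exp (- (1 * B)))) N).
  apply (is_lim_le_le_loc (fun B => - (c * bound B)) (fun _ => 0)).
  - exists 0. intros B HB.
    assert (Hl0 : 0 <= ln (1 + c * B)) by (rewrite <- ln_1; apply ln_le; nra).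
    assert (Hl1 : ln (1 + c * B) <= c * B).
    { rewrite <- (ln_exp (c * B)) at 2. apply ln_le; [nra|apply exp_ineq1_le]. }
    destruct (gamma_tail_bounds N B 0 ltac:(lra)) as [HS0 _].
    assert (E : B * gamma_tail N B = bound B).
    { unfold gamma_tail, bound. rewrite scal_sum. apply sum_eq. intros i _.
      rewrite Rmult_1_l. simpl pow. field. apply INR_fact_neq_0. }
    rewrite <- E. split; [|nra].
    assert (ln (1 + c * B) * gamma_tail N B <= c * B * gamma_tail N B)
      by (apply Rmult_le_compat_r; lra).
    nra.
  - replace (Finite 0) with (Rbar_opp 0) by (simpl; f_equal; ring).
    apply is_lim_opp, is_lim_scal_0, is_lim_sum_0. intros i _.
    apply is_lim_scal_0, is_lim_pow_mul_exp_neg. lra.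
  - apply is_lim_const.
Qed.

Lemma continuous_gamma_tail_ratio N c x : 0 < c ->
  continuous (fun x => gamma_tail N (x / c) / (1 + Rabs x)) x.
Proof.
  intros Hc.
  apply (continuous_mult (K:=R_AbsRing) (fun x => gamma_tail N (x / c)) (fun x => / (1 + Rabs x))).
  - apply (continuous_comp (fun x => x / c) (gamma_tail N)); [|apply continuous_gamma_tail].
    apply continuous_of_ex_derive. auto_derive. lra.
  - apply continuous_Rinv_comp; [|pose proof (Rabs_pos x); lra].
    apply (continuous_plus (V:=R_NormedModule) (fun _ => 1) Rabs);
      [apply continuous_const|apply continuous_Rabs].
Qed.

(* Integration by parts against the Gamma tail, followed by the substitution [x = c z]. *)
Lemma is_RInt_0_infty_ln_gamma N c J : 0 < c ->
  is_RInt_0_infty (fun x => gamma_tail N (x / c) / (1 + Rabs x)) J ->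
  is_RInt_0_infty (fun z => ln (1 + c * z) * (z ^ N * exp (- z) / INR (fact N))) J.
Proof.
  intros Hc HJ.
  set (q := fun x => gamma_tail N (x / c) / (1 + Rabs x)).
  assert (Hq : forall x, continuous q x) by (intros; now apply continuous_gamma_tail_ratio).
  set (F := fun B => - ln (1 + c * B) * gamma_tail N B + RInt q 0 (c * B)).
  assert (HD : forall t, 0 <= t -> is_derive F t (ln (1 + c * t) * (t ^ N * exp (- t) / INR (fact N)))).
  { intros t Ht.
    assert (Dq : is_derive (fun t => RInt q 0 (c * t)) t (c * q (c * t))).
    { apply (is_derive_comp (K:=R_AbsRing) (V:=R_NormedModule) (RInt q 0) (fun t => c * t)).
      - apply (is_derive_RInt (V:=R_CompleteNormedModule) q (RInt q 0) 0 (c * t)); [|apply Hq].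
        apply filter_forall. intros b. apply (RInt_correct (V:=R_CompleteNormedModule)).
        now apply ex_RInt_continuous_R.
      - auto_derive; [auto|ring]. }
    evar (d : R).
    replace (ln (1 + c * t) * (t ^ N * exp (- t) / INR (fact N))) with (d + c * q (c * t)).
    - apply (is_derive_plus (K:=R_AbsRing) (V:=R_NormedModule)); [|exact Dq].
      apply (is_derive_mult (K:=R_AbsRing) (fun t => - ln (1 + c * t)) (gamma_tail N));
        [auto_derive; [nra|reflexivity]|apply is_derive_gamma_tail|intros; apply Rmult_comm].
    - unfold d, q. rewrite Rabs_pos_eq by nra. replace (c * t / c) with t by (field; lra).
      unfold plus, mult; simpl. field. split; [apply INR_fact_neq_0|nra]. }
  assert (HR : forall B, 0 <= B ->
    is_RInt (fun z => ln (1 + c * z) * (z ^ N * exp (- z) / INR (fact N))) 0 B (F B)).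
  { intros B HB. replace (F B) with (minus (F B) (F 0)).
    - apply (is_RInt_derive (V:=R_CompleteNormedModule) F); intros x Hx;
        rewrite Rmin_left, Rmax_right in Hx by lra; [apply HD; lra|].
      apply continuous_of_ex_derive. auto_derive. nra.
    - unfold F, minus, plus, opp; simpl.
      rewrite Rmult_0_r, Rplus_0_r, ln_1, (RInt_point (V:=R_CompleteNormedModule)).
      change (zero : R) with 0. ring. }
  split; [intros b Hb; eexists; now apply HR|].
  apply (is_lim_ext_loc F).
  { exists 0. intros B HB. symmetry. apply is_RInt_unique, HR. lra. }
  replace (Finite J) with (Finite (0 + J)) by (f_equal; ring).
  apply is_lim_plus'; [now apply is_lim_ln_gamma_tail|].
  apply (is_lim_comp (RInt q 0) (fun B => c * B) p_infty J p_infty);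
    [apply HJ|now apply is_lim_scal_p_infty|exists 0; intros; discriminate].
Qed.

(** * The kernel *)

(* [1 + |x|] rather than [1 + x] makes the kernel continuous on the whole plane;
   only [x >= 0] matters. *)
Definition kernel (g1 g2 : R) (N : nat) (x y : R) : R :=
  exp (- y) * gamma_tail N (x * (1 + g2 * y) / g1) / (1 + Rabs x).

Lemma continuity_2d_pt_kernel g1 g2 N x y : continuity_2d_pt (kernel g1 g2 N) x y.
Proof.
  unfold kernel, Rdiv.
  apply (continuity_2d_pt_mult (fun u v => exp (- v) * gamma_tail N (u * (1 + g2 * v) * / g1))
                               (fun u v => / (1 + Rabs u))).
  - apply (continuity_2d_pt_mult (fun u v => exp (- v)) (fun u v => gamma_tail N (u * (1 + g2 * v) * / g1))).
    + apply (continuity_1d_2d_pt_comp exp (fun u v => - v)).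
      * apply derivable_continuous_pt, derivable_pt_exp.
      * apply (continuity_2d_pt_opp (fun u v => v)), continuity_2d_pt_id2.
    + apply (continuity_1d_2d_pt_comp (gamma_tail N) (fun u v => u * (1 + g2 * v) * / g1)).
      * apply continuity_pt_filterlim, continuous_gamma_tail.
      * apply (continuity_2d_pt_mult (fun u v => u * (1 + g2 * v)) (fun u v => / g1));
          [|apply continuity_2d_pt_const].
        apply (continuity_2d_pt_mult (fun u v => u) (fun u v => 1 + g2 * v));
          [apply continuity_2d_pt_id1|].
        apply (continuity_2d_pt_plus (fun u v => 1) (fun u v => g2 * v));
          [apply continuity_2d_pt_const|].
        apply (continuity_2d_pt_mult (fun u v => g2) (fun u v => v));
          [apply continuity_2d_pt_const|apply continuity_2d_pt_id2].
  - apply (continuity_2d_pt_inv (fun u v => 1 + Rabs u)); [|pose proof (Rabs_pos x); lra].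
    apply (continuity_2d_pt_plus (fun u v => 1) (fun u v => Rabs u)); [apply continuity_2d_pt_const|].
    apply (continuity_1d_2d_pt_comp Rabs (fun u v => u)); [apply Rcontinuity_abs|apply continuity_2d_pt_id1].
Qed.

(* For [y >= -1/(2 g2)] the argument of the Gamma tail is at least [x / (2 g1)]. *)
Lemma kernel_bounds g1 g2 N x y : 0 < g1 -> 0 < g2 -> 0 <= x -> - / (2 * g2) <= y ->
  0 <= kernel g1 g2 N x y <= sum_f_R0 (pow 2) N * exp (- (/ (4 * g1) * x)) * exp (- y).
Proof.
  intros H1 H2 Hx Hy. unfold kernel.
  assert (Hgy : - 1 / 2 <= g2 * y).
  { apply (Rmult_le_compat_l g2) in Hy; [|lra].
    replace (g2 * - / (2 * g2)) with (- 1 / 2) in Hy by (field; lra). lra. }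
  set (w := x * (1 + g2 * y) / g1).
  assert (Ha : 0 <= x / (2 * g1) <= w).
  { split; [apply Rdiv_le_0_compat; lra|].
    unfold w. apply Rmult_le_reg_r with (2 * g1); [lra|].
    replace (x / (2 * g1) * (2 * g1)) with x by (field; lra).
    replace (x * (1 + g2 * y) / g1 * (2 * g1)) with (2 * x * (1 + g2 * y)) by (field; lra). nra. }
  destruct (gamma_tail_bounds N w (x / (2 * g1)) Ha) as [S0 S1].
  replace (x / (2 * g1) / 2) with (/ (4 * g1) * x) in S1 by (field; lra).
  rewrite Rabs_pos_eq by lra. pose proof (exp_pos (- y)).
  split; [apply Rdiv_le_0_compat; [apply Rmult_le_pos|]; lra|].
  apply Rle_trans with (exp (- y) * gamma_tail N w).
  - unfold Rdiv. rewrite <- (Rmult_1_r (exp (- y) * gamma_tail N w)) at 2.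
    apply Rmult_le_compat_l; [nra|]. rewrite <- Rinv_1. apply Rinv_le_contravar; lra.
  - rewrite Rmult_comm. apply Rmult_le_compat_r; lra.
Qed.

Definition kernel_coef (g1 : R) (i : nat) (x : R) : R :=
  exp (- (x / g1)) * (x / g1) ^ i / INR (fact i) / (1 + x).

Lemma kernel_expand g1 g2 N x y : 0 < g1 -> 0 <= x ->
  kernel g1 g2 N x y =
  sum_f_R0 (fun i => kernel_coef g1 i x * (exp (- ((1 + g2 * x / g1) * y)) * (1 + g2 * y) ^ i)) N.
Proof.
  intros H1 Hx. unfold kernel, gamma_tail. rewrite Rabs_pos_eq by lra.
  unfold Rdiv at 1. rewrite Rmult_comm, <- Rmult_assoc, scal_sum.
  apply sum_eq. intros i _. unfold kernel_coef.
  replace (exp (- (x * (1 + g2 * y) / g1))) with (exp (- (x / g1)) * exp (- ((1 + g2 * x / g1) * y)) * exp y)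
    by (rewrite <- !exp_plus; f_equal; field; lra).
  replace (x * (1 + g2 * y) / g1) with (x / g1 * (1 + g2 * y)) by (field; lra).
  rewrite Rpow_mult_distr, (exp_Ropp y).
  assert (INR (fact i) <> 0) by apply INR_fact_neq_0. pose proof (exp_pos y).
  field. repeat split; lra.
Qed.

Definition I1_coef (g1 g2 : R) (i l : nat) : R :=
  powerRZ g1 (Z.of_nat l + 1 - Z.of_nat i) / (g2 * INR (fact (i - l))).

Definition I1_sum (g1 g2 : R) (N : nat) (x : R) : R :=
  sum_f_R0 (fun i => sum_f_R0 (fun l =>
    I1_coef g1 g2 i l * I1_integrand (1 / g1) (g1 / g2) i (l + 1) x) i) N.

Lemma powerRZ_succ_sub g l i : 0 < g -> powerRZ g (Z.of_nat l + 1 - Z.of_nat i) = g ^ (l + 1) / g ^ i.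
Proof.
  intros H. replace (Z.of_nat l + 1 - Z.of_nat i)%Z with (Z.of_nat (l + 1) + - Z.of_nat i)%Z by lia.
  rewrite powerRZ_add, powerRZ_neg', <- !pow_powerRZ by lra. reflexivity.
Qed.

Lemma kernel_coef_moment_term g1 g2 i j x : 0 < g1 -> 0 < g2 -> 0 <= x ->
  kernel_coef g1 i x * (INR (fact i) / INR (fact (i - j)) * g2 ^ j / (1 + g2 * x / g1) ^ (j + 1))
  = I1_coef g1 g2 i j * I1_integrand (1 / g1) (g1 / g2) i (j + 1) x.
Proof.
  intros H1 H2 Hx. unfold kernel_coef, I1_coef, I1_integrand. rewrite powerRZ_succ_sub by auto.
  replace (1 + g2 * x / g1) with ((x + g1 / g2) * (g2 / g1)) by (field; lra).
  replace (exp (- (1 / g1 * x))) with (exp (- (x / g1))) by (f_equal; field; lra).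
  unfold Rdiv. rewrite !Rpow_mult_distr, !pow_inv, !pow_add, !pow_1.
  assert (0 < x + g1 * / g2) by (assert (0 < g1 * / g2) by (apply Rdiv_lt_0_compat; lra); lra).
  assert (INR (fact i) <> 0) by apply INR_fact_neq_0.
  assert (INR (fact (i - j)) <> 0) by apply INR_fact_neq_0.
  assert (g1 ^ i <> 0) by (apply pow_nonzero; lra).
  assert (g1 ^ j <> 0) by (apply pow_nonzero; lra).
  assert (g2 ^ j <> 0) by (apply pow_nonzero; lra).
  assert ((x + g1 * / g2) ^ j <> 0) by (apply pow_nonzero; lra).
  field. repeat split; try assumption; nra.
Qed.

Lemma is_RInt_0_infty_kernel_snd g1 g2 N x : 0 < g1 -> 0 < g2 -> 0 <= x ->
  is_RInt_0_infty (fun y => kernel g1 g2 N x y) (I1_sum g1 g2 N x).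
Proof.
  intros H1 H2 Hx. set (lam := 1 + g2 * x / g1).
  assert (Hl : 0 < lam) by (assert (0 <= g2 * x / g1) by (apply Rdiv_le_0_compat; nra); unfold lam; lra).
  replace (I1_sum g1 g2 N x) with (sum_f_R0 (fun i => kernel_coef g1 i x * affine_moment lam g2 i 1) N).
  - apply (is_RInt_0_infty_ext (fun y => sum_f_R0 (fun i =>
             kernel_coef g1 i x * (exp (- (lam * y)) * (1 + g2 * y) ^ i)) N)).
    { intros y _. symmetry. now apply kernel_expand. }
    apply (is_RInt_0_infty_sum (fun i y => kernel_coef g1 i x * (exp (- (lam * y)) * (1 + g2 * y) ^ i))).
    intros i _. now apply is_RInt_0_infty_scal, is_RInt_0_infty_affine_moment.
  - unfold I1_sum. apply sum_eq. intros i _.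
    rewrite affine_moment_1, scal_sum by lra. apply sum_eq. intros j _.
    rewrite Rmult_comm. now apply kernel_coef_moment_term.
Qed.

Lemma is_RInt_0_infty_I1 a b m n : 0 < a -> 0 < b ->
  is_RInt_0_infty (I1_integrand a b m n) (RInt_0_infty (I1_integrand a b m n)).
Proof.
  intros Ha Hb.
  set (C := INR (fact m) * (2 / a) ^ m / b ^ n).
  assert (Hbn : 0 < b ^ n) by (apply pow_lt; lra).
  apply (is_RInt_0_infty_dominated _ (fun x => C * exp (- (a / 2 * x))) (C * / (a / 2))).
  - intros c Hc. apply (ex_RInt_continuous (V:=R_CompleteNormedModule)). intros z Hz.
    rewrite Rmin_left, Rmax_right in Hz by lra.
    unfold I1_integrand. apply continuous_of_ex_derive. auto_derive.
    apply Rmult_integral_contrapositive. split; [apply pow_nonzero|]; lra.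
  - intros x Hx. unfold I1_integrand.
    assert (Hd : b ^ n <= (x + b) ^ n * (x + 1)).
    { assert (b ^ n <= (x + b) ^ n) by (apply pow_incr; lra).
      assert (0 <= (x + b) ^ n) by (apply pow_le; lra). nra. }
    assert (Hnum : 0 <= x ^ m * exp (- (a * x)))
      by (apply Rmult_le_pos; [apply pow_le; lra|left; apply exp_pos]).
    split; [apply Rdiv_le_0_compat; lra|].
    apply Rle_trans with (x ^ m * exp (- (a * x)) / b ^ n).
    + unfold Rdiv. apply Rmult_le_compat_l; [exact Hnum|]. apply Rinv_le_contravar; lra.
    + unfold C. replace (INR (fact m) * (2 / a) ^ m / b ^ n * exp (- (a / 2 * x)))
        with (INR (fact m) * (2 / a) ^ m * exp (- (a / 2 * x)) / b ^ n) by (field; lra).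
      unfold Rdiv. apply Rmult_le_compat_r; [left; now apply Rinv_0_lt_compat|].
      now apply pow_mul_exp_neg_le.
  - apply is_RInt_0_infty_scal, is_RInt_0_infty_exp_neg. lra.
Qed.

Lemma is_RInt_0_infty_I1_sum g1 g2 N : 0 < g1 -> 0 < g2 ->
  is_RInt_0_infty (I1_sum g1 g2 N)
    (sum_f_R0 (fun i => sum_f_R0 (fun l =>
       I1_coef g1 g2 i l * RInt_0_infty (I1_integrand (1 / g1) (g1 / g2) i (l + 1))) i) N).
Proof.
  intros H1 H2. unfold I1_sum.
  apply (is_RInt_0_infty_sum (fun i x => sum_f_R0 (fun l =>
           I1_coef g1 g2 i l * I1_integrand (1 / g1) (g1 / g2) i (l + 1) x) i)).
  intros i _.
  apply (is_RInt_0_infty_sum (fun l x => I1_coef g1 g2 i l * I1_integrand (1 / g1) (g1 / g2) i (l + 1) x)).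
  intros l _. apply is_RInt_0_infty_scal, is_RInt_0_infty_I1; apply Rdiv_lt_0_compat; lra.
Qed.

Section KernelFubini.
Variables (g1 g2 : R) (N : nat).
Hypotheses (g1_pos : 0 < g1) (g2_pos : 0 < g2).

Let kernel_dominated x y : 0 <= x -> - / (2 * g2) <= y ->
  0 <= kernel g1 g2 N x y <= sum_f_R0 (pow 2) N * exp (- (/ (4 * g1) * x)) * exp (- y).
Proof. now apply kernel_bounds. Qed.

Let is_RInt_0_infty_dominating :
  is_RInt_0_infty (fun x => sum_f_R0 (pow 2) N * exp (- (/ (4 * g1) * x)))
                  (sum_f_R0 (pow 2) N * / / (4 * g1)).
Proof. apply is_RInt_0_infty_scal, is_RInt_0_infty_exp_neg, Rinv_0_lt_compat. lra. Qed.

Lemma is_RInt_0_infty_kernel_fst y : 0 <= y ->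
  is_RInt_0_infty (fun x => kernel g1 g2 N x y) (RInt_0_infty (fun x => kernel g1 g2 N x y)).
Proof.
  intros Hy. apply (inner_is_RInt_0_infty _ _ (fun y => exp (- y)) _ (/ (2 * g2))
                      (continuity_2d_pt_kernel g1 g2 N) is_RInt_0_infty_dominating kernel_dominated).
  assert (0 < / (2 * g2)) by (apply Rinv_0_lt_compat; lra). lra.
Qed.

Lemma is_RInt_0_infty_kernel :
  is_RInt_0_infty (fun y => RInt_0_infty (fun x => kernel g1 g2 N x y))
    (sum_f_R0 (fun i => sum_f_R0 (fun l =>
       I1_coef g1 g2 i l * RInt_0_infty (I1_integrand (1 / g1) (g1 / g2) i (l + 1))) i) N).
Proof.
  apply (is_RInt_0_infty_swap _ (fun x => sum_f_R0 (pow 2) N * exp (- (/ (4 * g1) * x)))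
           (fun y => exp (- y)) (I1_sum g1 g2 N) (sum_f_R0 (pow 2) N * / / (4 * g1)) 1
           (exp (/ (2 * g2))) (/ (2 * g2)) _ (continuity_2d_pt_kernel g1 g2 N)).
  - apply Rinv_0_lt_compat. lra.
  - intros x. apply continuous_of_ex_derive. auto_derive. auto.
  - intros y. apply continuous_of_ex_derive. auto_derive. auto.
  - intros x _. apply Rmult_le_pos; [apply cond_pos_sum; intros; apply pow_le; lra|left; apply exp_pos].
  - intros y Hy. split; [left; apply exp_pos|].
    destruct (Req_dec (- y) (/ (2 * g2))) as [->|]; [lra|left; apply exp_increasing; lra].
  - exact is_RInt_0_infty_dominating.
  - rewrite <- Rinv_1. apply (is_RInt_0_infty_ext (fun y => exp (- (1 * y)))); [intros; now rewrite Rmult_1_l|].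
    apply is_RInt_0_infty_exp_neg. lra.
  - exact kernel_dominated.
  - intros x Hx. now apply is_RInt_0_infty_kernel_snd.
  - now apply is_RInt_0_infty_I1_sum.
Qed.

End KernelFubini.

Lemma is_RInt_0_infty_log2_gamma g1 g2 N y : 0 < g1 -> 0 < g2 -> 0 <= y ->
  is_RInt_0_infty (fun z => log2 (1 + g1 * z / (1 + g2 * y)) * gamma_pdf (S N) z * exp_pdf y)
    (/ ln 2 * RInt_0_infty (fun x => kernel g1 g2 N x y)).
Proof.
  intros H1 H2 Hy.
  assert (Hl2 : 0 < ln 2) by (pose proof ln_lt_2; lra).
  set (c := g1 / (1 + g2 * y)).
  assert (Hc : 0 < c) by (apply Rdiv_lt_0_compat; nra).
  set (K := RInt_0_infty (fun x => kernel g1 g2 N x y)).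
  assert (HJ : is_RInt_0_infty (fun x => gamma_tail N (x / c) / (1 + Rabs x)) (exp y * K)).
  { apply (is_RInt_0_infty_ext (fun x => exp y * kernel g1 g2 N x y)).
    - intros x _. unfold kernel. replace (x * (1 + g2 * y) / g1) with (x / c) by (unfold c; field; nra).
      rewrite exp_Ropp. pose proof (exp_pos y). pose proof (Rabs_pos x). field. lra.
    - apply is_RInt_0_infty_scal, is_RInt_0_infty_kernel_fst; auto. }
  apply (is_RInt_0_infty_ln_gamma N c _ Hc) in HJ.
  apply (is_RInt_0_infty_scal _ _ (/ ln 2 * exp (- y))) in HJ.
  replace (/ ln 2 * K) with (/ ln 2 * exp (- y) * (exp y * K))
    by (rewrite exp_Ropp; pose proof (exp_pos y); field; lra).
  revert HJ. apply is_RInt_0_infty_ext. intros z Hz.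
  unfold log2, gamma_pdf, exp_pdf. replace (S N - 1)%nat with N by lia.
  replace (g1 * z / (1 + g2 * y)) with (c * z) by (unfold c; field; nra).
  assert (INR (fact N) <> 0) by apply INR_fact_neq_0.
  field. lra.
Qed.

Theorem lemma3 (g1 g2 : R) (M : nat) :
  0 < g1 -> 0 < g2 -> (1 <= M)%nat ->
  exists (G : R -> R) (Ival : nat -> nat -> R),
    (forall y, 0 <= y ->
       ImpInt (fun z => log2 (1 + g1 * z / (1 + g2 * y)) * gamma_pdf M z * exp_pdf y)
              (G y)) /\
    (forall i l : nat,
       ImpInt (I1_integrand (1 / g1) (g1 / g2) i (l + 1)) (Ival i l)) /\
    ImpInt G
      (log2 (exp 1) *
       sum_f_R0 (fun i =>
         sum_f_R0 (fun l =>
           powerRZ g1 (Z.of_nat l + 1 - Z.of_nat i)%Z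
             / (g2 * INR (fact (i - l))) * Ival i l) i) (M - 1)).
Proof.
  intros H1 H2 HM. destruct M as [|N]; [lia|]. replace (S N - 1)%nat with N by lia.
  set (K := fun y => RInt_0_infty (fun x => kernel g1 g2 N x y)).
  exists (fun y => / ln 2 * K y), (fun i l => RInt_0_infty (I1_integrand (1 / g1) (g1 / g2) i (l + 1))).
  split; [|split].
  - intros y Hy. apply is_RInt_0_infty_ImpInt. now apply is_RInt_0_infty_log2_gamma.
  - intros i l. apply is_RInt_0_infty_ImpInt, is_RInt_0_infty_I1; apply Rdiv_lt_0_compat; lra.
  - apply is_RInt_0_infty_ImpInt.
    replace (log2 (exp 1)) with (/ ln 2)
      by (unfold log2; rewrite ln_exp; field; pose proof ln_lt_2; lra).
    now apply is_RInt_0_infty_scal, is_RInt_0_infty_kernel.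
Qed.
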